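(* Let $d,n\in\mathbb N$ with $n\ge2$, $A\in\mathbb R^{d\times d}$, $V=I_d$, and let $f$ be self-attention with parameters $(A,V)$. Let $\gamma$ be a real eigenvalue of $A$ and $u\in\mathbb R^d$ an associated unit eigenvector. (1) If $\gamma\ge0$, let $X:=(u,\tfrac u2,\dots,\tfrac u2)\in(\mathbb R^d)^n$. Then for every $R>0$, $$\|D_{RX}f\|_2\ge\frac{\sqrt{n-1}}{1+(n-1)e^{-R^2\gamma/4}}.$$ (2) If $\gamma<0$, let $X:=(u,-u,\dots,-u)\in(\mathbb R^d)^n$. Then for every $R>0$, $$\|D_{RX}f\|_2\ge\frac{\sqrt{n-1}}{1+(n-1)e^{-2R^2|\gamma|}}.$$
   Context: For $X=(x_1,\dots,x_n)\in(\mathbb R^d)^n$, $f(X)=\big(V\sum_{j=1}^nP_{ij}x_j\big)_{1\le i\le n}$ with $P_{ij}=\exp(x_i^\top A^\top x_j)/\sum_{l=1}^n\exp(x_i^\top A^\top x_l)$. $D_Xf$ is the differential of $f$ at $X$, and $\|D_Xf\|_2$ is its operator norm when $(\mathbb R^d)^n$ is equipped with the Frobenius norm $\|X\|_F=(\sum_i|x_i|^2)^{1/2}$ on both input and output. $RX$ denotes $(Rx_1,\dots,Rx_n)$. *)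

From HB Require Import structures.
From mathcomp Require Import all_boot all_order all_algebra.
From mathcomp Require Import all_classical all_reals all_analysis.
Set Implicit Arguments. Unset Strict Implicit. Unset Printing Implicit Defensive.
Import Order.TTheory GRing.Theory Num.Theory.
Import numFieldNormedType.Exports.
Local Open Scope classical_set_scope.
Local Open Scope ring_scope.

(* A point X = (x_1,...,x_n) of (R^d)^n is an n x d matrix whose i-th row is x_i^T. *)

Definition att_score (K : realType) (n d : nat) (A : 'M[K]_d) (X : 'M[K]_(n, d))
  (i j : 'I_n) : K :=
  (row i X *m A^T *m (row j X)^T) 0 0.

Definition att_P (K : realType) (n d : nat) (A : 'M[K]_d) (X : 'M[K]_(n, d))
  (i j : 'I_n) : K :=
  expR (att_score A X i j) / \sum_(l < n) expR (att_score A X i l).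

(* self-attention f(X)_i = V * sum_j P_ij x_j  (written on rows: (sum_j P_ij x_j^T) V^T) *)
Definition selfattn (K : realType) (n d : nat) (A V : 'M[K]_d) (X : 'M[K]_(n, d))
  : 'M[K]_(n, d) :=
  \matrix_(i < n) ((\sum_(j < n) att_P A X i j *: row j X) *m V^T).

Definition frob (K : realType) (m p : nat) (M : 'M[K]_(m, p)) : K :=
  Num.sqrt (\sum_(i < m) \sum_(k < p) M i k ^+ 2).

Definition opnorm_F (K : realType) (m p : nat) (L : 'M[K]_(m, p) -> 'M[K]_(m, p)) : K :=
  sup [set frob (L H) | H in [set H : 'M[K]_(m, p) | frob H <= 1]].

Definition X_pos (K : realType) (n d : nat) (u : 'rV[K]_d) : 'M[K]_(n, d) :=
  \matrix_(i < n) (if (i : nat) == 0%N then u else 2^-1 *: u).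

Definition X_neg (K : realType) (n d : nat) (u : 'rV[K]_d) : 'M[K]_(n, d) :=
  \matrix_(i < n) (if (i : nat) == 0%N then u else - u).

From HB Require Import structures.
From mathcomp Require Import all_boot all_order all_algebra.
From mathcomp Require Import all_classical all_reals all_analysis.
From mathcomp Require Import ring lra.
Import Order.TTheory GRing.Theory Num.Theory.
Import numFieldNormedType.Exports.
Local Open Scope classical_set_scope.
Local Open Scope ring_scope.

(* Since [u] is an eigenvector of [A], self-attention with [V = 1] maps inputs
   whose rows are multiples [a_i u] of [u] to inputs of the same kind: the
   scores become [gamma a_i a_l] and [a] is replaced by its softmax-weighted
   means [softmean a].  Perturb only [a_0], along the Frobenius-unit direction
   [e_0 u].  For every other row the mean is a weighted mean in which a single
   point moves at unit speed while the remaining mass stays put, so it moves at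
   rate at least the weight [p = 1 / (1 + (n - 1) e^(gamma b^2 - gamma b r))] of
   the moving point provided [gamma b (r - b) >= 0].  Hence the derivative in
   that direction has Frobenius norm at least [sqrt (n - 1) p].  Both inputs
   are of the form [(r, b, ..., b)], with [b = r/2] and [b = -r]. *)

Section Calculus.
Context {K : realType}.

Lemma differentiable_sumf (V W : normedModType K) m (f : 'I_m -> V -> W) x :
  (forall i, differentiable (f i) x) -> differentiable (fun y => \sum_i f i y) x.
Proof.
move=> h; rewrite (_ : (fun y => _) = \sum_i f i); first exact: differentiable_sum.
by apply/funext => y; rewrite fct_sumE.
Qed.

Lemma differentiable_expR (x : K) : differentiable (@expR K) x.
Proof. by apply/derivable1_diffP; exact: derivable_expR. Qed.

Lemma derive_along_line (V W : normedModType K) (f : V -> W) a v :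
  'D_v f a = 'D_1 (fun t : K => f (a + t *: v)) 0.
Proof.
rewrite /derive; congr lim.
have -> : (fun h : K => h^-1 *: ((f \o shift a) (h *: v) - f a)) =
    (fun h : K => h^-1 *: (((fun t : K => f (a + t *: v)) \o shift 0) h%:A
                           - f (a + 0 *: v))).
  apply/funext => h /=.
  by rewrite scale0r !addr0 (_ : h%:A = h) ?(addrC a) // /GRing.scale /= mulr1.
by [].
Qed.

Lemma derive1_sumZ (W : normedModType K) p (g : 'I_p -> K -> K) (M : 'I_p -> W) :
  (forall j, derivable (g j) 0 1) ->
  'D_1 (fun t => \sum_j g j t *: M j) 0 = \sum_j 'D_1 (g j) 0 *: M j.
Proof.
move=> dg; have dgM j : differentiable (fun t => g j t *: M j) (0 : K).
  by apply: differentiableZl; apply/derivable1_diffP.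
rewrite (_ : (fun t => _) = \sum_j (fun t => g j t *: M j)); last first.
  by apply/funext => t; rewrite fct_sumE.
rewrite derive_sum; last by move=> j; apply: diff_derivable.
apply: eq_bigr => j _; rewrite deriveE // diffZl; last exact/derivable1_diffP.
by rewrite -deriveE //; apply/derivable1_diffP.
Qed.

(* The mean of a point at [r + t] carrying weight [expR (k * (r + t))] and of a
   mass [C] sitting at [b]. *)
Lemma is_derive_moving_mean (k r b C : K) : 0 <= C ->
  is_derive (0 : K) 1
    (fun t => (expR (k * (r + t)) * (r + t) + C * b) * (expR (k * (r + t)) + C)^-1)
    (expR (k * r) / (expR (k * r) + C)
     + expR (k * r) * C * k * (r - b) / (expR (k * r) + C) ^+ 2).
Proof.
move=> C0; set E0 := expR (k * r).
have dlin : is_derive (0 : K) 1 (fun t : K => k * (r + t)) k.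
  have -> : (fun t : K => k * (r + t)) = k *: (cst r + id) by apply/funext.
  by apply: is_derive_eq; rewrite add0r; exact: mulr1.
have dE : is_derive (0 : K) 1 (fun t => expR (k * (r + t))) (E0 * k).
  rewrite -[X in is_derive _ _ X _]/(expR \o (fun t => k * (r + t))).
  by apply: is_derive_eq; rewrite addr0.
have dN : is_derive (0 : K) 1 (fun t => expR (k * (r + t)) * (r + t) + C * b)
    (E0 + r * (E0 * k)).
  rewrite -[X in is_derive _ _ X _]/((fun t => expR (k * (r + t))) * (fun t => r + t)
    + cst (C * b)).
  by apply: is_derive_eq; rewrite !addr0 /GRing.scale /= add0r !mulr1.
have E0C : E0 + C != 0 by rewrite gt_eqF // ltr_wpDr // expR_gt0.
have dD : is_derive (0 : K) 1 (fun t => (expR (k * (r + t)) + C)^-1)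
    (- (expR (k * (r + 0)) + C) ^- 2 *: (E0 * k)).
  apply: is_deriveV; first by rewrite addr0.
  rewrite -[X in is_derive _ _ X _]/((fun t => expR (k * (r + t))) + cst C).
  by apply: is_derive_eq; rewrite addr0.
rewrite -[X in is_derive _ _ X _]/((fun t => expR (k * (r + t)) * (r + t) + C * b)
  * (fun t => (expR (k * (r + t)) + C)^-1)).
by apply: is_derive_eq; rewrite !addr0 /GRing.scale /= -/E0; field.
Qed.

End Calculus.

Section SelfattnDifferentiable.
Context {K : realType} {n d : nat} (A : 'M[K]_d).

Lemma att_scoreE (X : 'M[K]_(n, d)) i j :
  att_score A X i j = \sum_a \sum_b X i b * A a b * X j a.
Proof.
rewrite /att_score !mxE; apply: eq_bigr => a _; rewrite !mxE big_distrl /=.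
by apply: eq_bigr => b _; rewrite !mxE.
Qed.

Lemma differentiable_att_score (X : 'M[K]_(n, d)) i j :
  differentiable (fun Y => att_score A Y i j) X.
Proof.
rewrite (_ : (fun Y => _) =
  fun Y : 'M[K]_(n, d) => \sum_a \sum_b Y i b * A a b * Y j a); last first.
  by apply/funext => Y; rewrite att_scoreE.
apply: differentiable_sumf => a; apply: differentiable_sumf => b.
apply: differentiableM; last exact: differentiable_coord.
by apply: differentiableM; [exact: differentiable_coord | exact: differentiable_cst].
Qed.

Lemma differentiable_expR_att_score (X : 'M[K]_(n, d)) i j :
  differentiable (fun Y => expR (att_score A Y i j)) X.
Proof.
exact: differentiable_comp (differentiable_att_score X i j) (differentiable_expR _).
Qed.

Lemma differentiable_att_P (X : 'M[K]_(n, d)) i j :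
  differentiable (fun Y => att_P A Y i j) X.
Proof.
apply: differentiableM; first exact: differentiable_expR_att_score.
apply: differentiableV.
  by apply: differentiable_sumf => l; exact: differentiable_expR_att_score.
by rewrite gt_eqF // (bigD1 j) //= ltr_pwDl ?expR_gt0 // sumr_ge0.
Qed.

Lemma selfattn_id_coord (X : 'M[K]_(n, d)) i k :
  selfattn A 1%:M X i k = \sum_l att_P A X i l * X l k.
Proof.
rewrite /selfattn !mxE (bigD1 k) //= [X in _ + X]big1; last first.
  by move=> j /negbTE jk; rewrite !mxE eq_sym jk mulr0.
rewrite !mxE eqxx mulr1 addr0 summxE; apply: eq_bigr => l _.
by rewrite !mxE.
Qed.

Lemma differentiable_selfattn_id (X : 'M[K]_(n, d)) :
  differentiable (selfattn A 1%:M) X.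
Proof.
rewrite (_ : selfattn A 1%:M = fun Y =>
    \sum_i \sum_k (\sum_l att_P A Y i l * Y l k) *: delta_mx i k); last first.
  apply/funext => Y; rewrite {1}[selfattn A 1%:M Y]matrix_sum_delta.
  by apply: eq_bigr => i _; apply: eq_bigr => k _; rewrite selfattn_id_coord.
apply: differentiable_sumf => i; apply: differentiable_sumf => k.
apply: differentiableZl; apply: differentiable_sumf => l.
by apply: differentiableM; [exact: differentiable_att_P | exact: differentiable_coord].
Qed.

End SelfattnDifferentiable.

Section OperatorNorm.
Context {K : realType}.

Lemma mx_norm_le_frob {p q : nat} (M : 'M[K]_(p, q)) : `|M| <= frob M.
Proof.
rewrite [leLHS]/Num.Def.normr /= mx_normrE.
apply: bigmax_le => [|[i k] _ /=]; first exact: sqrtr_ge0.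
rewrite -sqrtr_sqr ler_sqrt; last by do 2!apply: sumr_ge0 => ? _; exact: sqr_ge0.
rewrite (bigD1 i) //= (bigD1 k) //= -addrA lerDl.
by apply: addr_ge0; do ?apply: sumr_ge0 => ? _; exact: sqr_ge0.
Qed.

Lemma mx_entry_le_norm {p q : nat} (M : 'M[K]_(p, q)) i k : `|M i k| <= `|M|.
Proof.
rewrite [leRHS]/Num.Def.normr /= mx_normrE.
by apply/bigmax_geP; right => /=; exists (i, k).
Qed.

Lemma opnorm_F_ge {p q : nat} {L : {linear 'M[K]_(p, q) -> 'M[K]_(p, q)}}
    (H : 'M[K]_(p, q)) :
  continuous L -> frob H <= 1 -> frob (L H) <= opnorm_F L.
Proof.
move=> cL H1; have [k k0 Lk] := linear_lipschitz cL.
apply: ub_le_sup; last by exists H.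
exists (Num.sqrt (\sum_(i < p) \sum_(j < q) k ^+ 2)) => _ [H' H'1 <-].
rewrite /frob ler_sqrt; last by do 2!apply: sumr_ge0 => ? _; exact: sqr_ge0.
apply: ler_sum => i _; apply: ler_sum => j _.
rewrite -[leLHS]real_normK ?num_real //.
apply: lerXn2r; rewrite ?nnegrE ?normr_ge0 ?(ltW k0) //.
apply: le_trans (mx_entry_le_norm (L H') i j) _.
apply: le_trans (Lk H') _.
rewrite ler_piMr ?(ltW k0) //; exact: le_trans (mx_norm_le_frob H') H'1.
Qed.

End OperatorNorm.

Section RankOneInputs.
Context {K : realType} {d : nat}.
Variables (A : 'M[K]_d) (g : K) (u : 'rV[K]_d).
Hypotheses (Au : A *m u^T = g *: u^T) (u_unit : \sum_(k < d) u 0 k ^+ 2 = 1).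

Definition rank1 {n} (a : 'I_n -> K) : 'M[K]_(n, d) := \matrix_(i, k) (a i * u 0 k).

Definition softmean {n} (a : 'I_n -> K) (i : 'I_n) : K :=
  (\sum_l expR (g * a i * a l) * a l) / \sum_l expR (g * a i * a l).

Lemma rank1_line n (a b : 'I_n -> K) t :
  rank1 a + t *: rank1 b = rank1 (fun i => a i + t * b i).
Proof. by apply/matrixP => i k; rewrite !mxE mulrDl mulrA. Qed.

Lemma rank1_sum n (a : 'I_n -> K) :
  rank1 a = \sum_j a j *: rank1 (fun i => (i == j)%:R).
Proof.
apply/matrixP => i k; rewrite summxE (bigD1 i) //= big1 ?addr0 => [|j /negbTE ij].
  by rewrite !mxE eqxx mul1r.
by rewrite !mxE eq_sym ij mul0r mulr0.
Qed.

Lemma frob_rank1 n (a : 'I_n -> K) : frob (rank1 a) = Num.sqrt (\sum_i a i ^+ 2).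
Proof.
congr Num.sqrt; apply: eq_bigr => i _.
by rewrite -[RHS]mulr1 -u_unit mulr_sumr; apply: eq_bigr => k _; rewrite mxE exprMn.
Qed.

Lemma frob_rank1_pivot n : frob (rank1 (fun i : 'I_n.+1 => (i == ord0)%:R)) = 1.
Proof.
rewrite frob_rank1 big_ord_recl big1 => [|i _]; first by rewrite expr1n addr0 sqrtr1.
by rewrite eq_sym (negbTE (neq_lift ord0 i)) expr2 mul0r.
Qed.

Lemma att_score_rank1 n (a : 'I_n -> K) i l :
  att_score A (rank1 a) i l = g * a i * a l.
Proof.
have Au_coord k : \sum_b A k b * u 0 b = g * u 0 k.
  have := congr1 (fun M : 'M[K]_(d, 1) => M k 0) Au; rewrite !mxE => <-.
  by apply: eq_bigr => b _; rewrite !mxE.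
rewrite att_scoreE -[RHS]mulr1 -u_unit mulr_sumr; apply: eq_bigr => k _.
transitivity (a i * a l * u 0 k * \sum_b A k b * u 0 b); last first.
  by rewrite Au_coord; ring.
by rewrite mulr_sumr; apply: eq_bigr => b _; rewrite !mxE; ring.
Qed.

Lemma selfattn_rank1 n (a : 'I_n -> K) :
  selfattn A 1%:M (rank1 a) = rank1 (softmean a).
Proof.
apply/matrixP => i k; rewrite selfattn_id_coord mxE /softmean mulr_suml mulr_suml.
apply: eq_bigr => l _; rewrite /att_P !att_score_rank1 mxE.
rewrite (eq_bigr (fun l' => expR (g * a i * a l'))) => [|l' _]; last first.
  by rewrite att_score_rank1.
ring.
Qed.

Definition pivot_line {n} (c : 'I_n.+1 -> K) (t : K) (l : 'I_n.+1) : K :=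
  c l + t * (l == ord0)%:R.

Lemma differentiable_softmean_pivot_line n (c : 'I_n.+1 -> K) j x :
  differentiable (fun t => softmean (pivot_line c t) j) x.
Proof.
have dline l : differentiable (fun t : K => pivot_line c t l) x.
  apply: differentiableD; first exact: differentiable_cst.
  apply: differentiableM; last exact: differentiable_cst.
  exact/derivable1_diffP/derivable_id.
have dexp l : differentiable
    (fun t => expR (g * pivot_line c t j * pivot_line c t l)) x.
  apply: (differentiable_comp _ (differentiable_expR _)).
  apply: differentiableM (dline l).
  by apply: differentiableM (dline j); exact: differentiable_cst.
apply: differentiableM.
  by apply: differentiable_sumf => l; exact: differentiableM.
apply: differentiableV; first exact: differentiable_sumf.
by rewrite gt_eqF // (bigD1 ord0) //= ltr_pwDl ?expR_gt0 // sumr_ge0.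
Qed.

Lemma d_selfattn_rank1_pivot n (c : 'I_n.+1 -> K) :
  'd (selfattn A 1%:M) (rank1 c) (rank1 (fun i => (i == ord0)%:R))
  = rank1 (fun j => 'D_1 (fun t => softmean (pivot_line c t) j) 0).
Proof.
rewrite -deriveE; last exact: differentiable_selfattn_id.
rewrite derive_along_line (_ : (fun t => _) = fun t =>
    \sum_j softmean (pivot_line c t) j *: rank1 (fun i => (i == j)%:R)); last first.
  by apply/funext => t; rewrite rank1_line selfattn_rank1 rank1_sum.
rewrite derive1_sumZ => [|j]; first by rewrite [RHS]rank1_sum.
exact/diff_derivable/differentiable_softmean_pivot_line.
Qed.

Definition two_level {n} (r b : K) (i : 'I_n.+1) : K := if i == ord0 then r else b.

Lemma scale_X_pos_rank1 n r : r *: X_pos n.+1 u = rank1 (two_level r (r / 2)).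
Proof.
apply/matrixP => i k; rewrite !mxE /two_level -val_eqE /=.
by case: ifP => _; rewrite ?mxE; ring.
Qed.

Lemma scale_X_neg_rank1 n r : r *: X_neg n.+1 u = rank1 (two_level r (- r)).
Proof.
apply/matrixP => i k; rewrite !mxE /two_level -val_eqE /=.
by case: ifP => _; rewrite ?mxE; ring.
Qed.

Section TwoLevelInputs.
Variables (n : nat) (r b : K).
Let c : 'I_n.+1 -> K := two_level r b.

Lemma softmean_two_level_line j : j != ord0 ->
  (fun t => softmean (pivot_line c t) j) = fun t =>
    (expR (g * b * (r + t)) * (r + t) + expR (g * b * b) *+ n * b) *
    (expR (g * b * (r + t)) + expR (g * b * b) *+ n)^-1.
Proof.
move=> j0; apply/funext => t.
have line_off l : l != ord0 -> pivot_line c t l = b.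
  by rewrite /pivot_line /c /two_level => /negbTE ->; rewrite mulr0 addr0.
have line_0 : pivot_line c t ord0 = r + t.
  by rewrite /pivot_line /c /two_level eqxx mulr1.
rewrite /softmean !big_ord_recl line_off // line_0.
have line_lift l : pivot_line c t (lift ord0 l) = b.
  by apply: line_off; rewrite eq_sym neq_lift.
under eq_bigr do rewrite line_lift.
under [X in _ / (_ + X)]eq_bigr do rewrite line_lift.
by rewrite !sumr_const card_ord mulrnAl.
Qed.
Lemma softmean_two_level_rate_ge j : j != ord0 -> 0 <= g * b * (r - b) ->
  expR (g * b * r) / (expR (g * b * r) + expR (g * b * b) *+ n)
    <= 'D_1 (fun t => softmean (pivot_line c t) j) 0.
Proof.
move=> j0 sgn; rewrite softmean_two_level_line //.
have C0 : 0 <= expR (g * b * b) *+ n by rewrite mulrn_wge0 // expR_ge0.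
have [_ ->] := is_derive_moving_mean (g * b) r b _ C0.
rewrite lerDl.
by rewrite divr_ge0 ?sqr_ge0 // -mulrA mulr_ge0 // mulr_ge0 ?expR_ge0.
Qed.

Lemma opnorm_d_selfattn_two_level_ge : 0 <= g * b * (r - b) ->
  Num.sqrt n%:R / (1 + n%:R * expR (g * b * b - g * b * r))
    <= opnorm_F ('d (selfattn A 1%:M) (rank1 c)).
Proof.
move=> sgn; set E0 := expR (g * b * r); set C := expR (g * b * b) *+ n.
set P := E0 / (E0 + C).
have E0_gt0 : 0 < E0 by exact: expR_gt0.
have C_ge0 : 0 <= C by rewrite mulrn_wge0 // expR_ge0.
have P_ge0 : 0 <= P by rewrite divr_ge0 // ltW // ltr_wpDr.
have cL := diff_continuous (differentiable_selfattn_id A (rank1 c)).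
have e0_le : frob (rank1 (fun i : 'I_n.+1 => (i == ord0)%:R)) <= 1.
  by rewrite frob_rank1_pivot.
apply: le_trans (opnorm_F_ge _ cL e0_le).
rewrite d_selfattn_rank1_pivot frob_rank1.
have -> : Num.sqrt n%:R / (1 + n%:R * expR (g * b * b - g * b * r))
    = Num.sqrt (n%:R * P ^+ 2).
  rewrite sqrtrM ?ler0n // sqrtr_sqr ger0_norm //; congr (_ * _).
  rewrite /P /C expRB -/E0 -mulr_natl.
  have nE_ge0 : 0 <= n%:R * expR (g * b * b) :> K.
    by rewrite mulr_ge0 ?ler0n ?expR_ge0.
  by field; apply/andP; split; rewrite gt_eqF //; lra.
rewrite ler_sqrt; last by rewrite sumr_ge0 // => l _; exact: sqr_ge0.
rewrite big_ord_recl; apply: ler_wpDl; first exact: sqr_ge0.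
rewrite mulr_natl -[n in _ *+ n]card_ord -sumr_const; apply: ler_sum => l _.
have l0 : lift ord0 l != ord0 by rewrite eq_sym neq_lift.
have rate := softmean_two_level_rate_ge _ l0 sgn.
by apply: lerXn2r; rewrite ?nnegrE // (le_trans P_ge0 rate).
Qed.

End TwoLevelInputs.

End RankOneInputs.

Theorem mainTheorem3 (K : realType) (d n : nat) (A : 'M[K]_d) (gamma : K)
    (u : 'rV[K]_d) :
  (2 <= n)%N ->
  A *m u^T = gamma *: u^T ->
  \sum_(k < d) u 0 k ^+ 2 = 1 ->
  ((0 <= gamma) ->
     forall r : K, 0 < r ->
       Num.sqrt (n%:R - 1) / (1 + (n%:R - 1) * expR (- (r ^+ 2 * gamma / 4)))
         <= opnorm_F ('d (@selfattn K n d A 1%:M) (r *: X_pos n u)))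
  /\
  ((gamma < 0) ->
     forall r : K, 0 < r ->
       Num.sqrt (n%:R - 1) / (1 + (n%:R - 1) * expR (- (2 * r ^+ 2 * `|gamma|)))
         <= opnorm_F ('d (@selfattn K n d A 1%:M) (r *: X_neg n u))).
Proof.
case: n => [|[|n]] // _ Au u_unit.
have -> : (n.+2%:R - 1 : K) = n.+1%:R by rewrite mulrSr addrK.
split => [gamma_ge0 | gamma_lt0] r r_gt0.
- rewrite scale_X_pos_rank1.
  have -> : - (r ^+ 2 * gamma / 4) = gamma * (r / 2) * (r / 2) - gamma * (r / 2) * r.
    by field.
  by apply: opnorm_d_selfattn_two_level_ge => //; nra.
- rewrite scale_X_neg_rank1.
  have -> : - (2 * r ^+ 2 * `|gamma|) = gamma * (- r) * (- r) - gamma * (- r) * r.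
    by rewrite ltr0_norm //; ring.
  by apply: opnorm_d_selfattn_two_level_ge => //; nra.
Qed.
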